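(* Let $G$ be a $2$-connected graph and $x,y\in V(G)$. Suppose $G\setminus\{x,y\}$ has $k\ge2$ components and $\{x,y\}$ is not an admissible $2$-cut of $G$. Then (1) if $k\ge3$, $G\cong K_{2,3}$; (2) if $k=2$ and $xy\in E(G)$, $G\cong K_4\setminus e$; (3) if $k=2$ and $xy\notin E(G)$, at least one component of $G\setminus\{x,y\}$ is a single vertex.
   Context: Graphs are finite and simple. 2-sum: for $i=1,2$ let $G_i$ be disjoint graphs and $z_i\in V(G_i)$ incident with exactly two edges $x_iz_i,y_iz_i$; let $G_i'=G_i\setminus z_i$ if $x_iy_i\notin E(G_i)$ and $G_i'=G_i\setminus z_i\setminus x_iy_i$ otherwise. A 2-sum over $z_1,z_2$ is obtained from $G_1',G_2'$ by identifying $x_1$ with $x_2$ and $y_1$ with $y_2$ and then, if $x_iy_i\in E(G_i)$ for at least one $i$, adding an edge between the two identified vertices, which are called the joins. Two vertices $x,y$ of a $2$-connected graph $G$ form an admissible $2$-cut if $G$ is a 2-sum of two graphs, each having fewer edges than $G$, whose set of joins is $\{x,y\}$. *)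

From mathcomp Require Import all_boot.
Set Implicit Arguments. Unset Strict Implicit. Unset Printing Implicit Defensive.

Definition simple_graph (T : finType) (e : rel T) : Prop :=
  symmetric e /\ irreflexive e.

Definition sub_rel (T : finType) (e : rel T) (S : {set T}) : rel T :=
  fun u v => [&& u \in S, v \in S & e u v].

Definition connected_on (T : finType) (e : rel T) (S : {set T}) : Prop :=
  forall u v, u \in S -> v \in S -> connect (sub_rel e S) u v.

Definition two_connected (T : finType) (e : rel T) : Prop :=
  3 <= #|T| /\ connected_on e [set: T] /\ forall v, connected_on e [set~ v].

Definition components (T : finType) (e : rel T) (S : {set T}) : {set {set T}} :=
  [set [set v in S | connect (sub_rel e S) u v] | u in S].

(* number of edges (each unordered edge is counted twice as ordered pair) *)
Definition nedges (T : finType) (e : rel T) : nat :=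
  #|[set p : T * T | e p.1 p.2]|./2.

(* G (on T, edge relation e) is (isomorphic to) the 2-sum of G1 and G2 over
   z1, z2, where x_i, y_i are the two neighbours of z_i, x1 is identified with
   x2 (giving x) and y1 with y2 (giving y). f1, f2 embed V(G_i) \ z_i into V(G). *)
Definition is_2sum (T1 T2 T : finType) (e1 : rel T1) (e2 : rel T2) (e : rel T)
    (z1 x1 y1 : T1) (z2 x2 y2 : T2) (x y : T) : Prop :=
  let e1' := fun a b => e1 a b && ~~ (((a == x1) && (b == y1)) || ((a == y1) && (b == x1))) in
  let e2' := fun a b => e2 a b && ~~ (((a == x2) && (b == y2)) || ((a == y2) && (b == x2))) in
  [/\ x1 != y1, x2 != y2,
      (forall v, e1 z1 v = (v == x1) || (v == y1)),
      (forall v, e2 z2 v = (v == x2) || (v == y2)) &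
  (exists (f1 : T1 -> T) (f2 : T2 -> T),
    [/\ [/\ {in [set~ z1] &, injective f1},
            {in [set~ z2] &, injective f2} &
            [/\ f1 x1 = x, f1 y1 = y, f2 x2 = x & f2 y2 = y]],
        (forall v, (exists a, a != z1 /\ f1 a = v) \/ (exists b, b != z2 /\ f2 b = v)),
        (forall a b, a != z1 -> b != z2 -> f1 a = f2 b ->
            ((a == x1) && (b == x2)) || ((a == y1) && (b == y2))) &
        (forall u v, e u v <->
           (exists a b, [/\ a != z1, b != z1, e1' a b, f1 a = u & f1 b = v]) \/
           (exists a b, [/\ a != z2, b != z2, e2' a b, f2 a = u & f2 b = v]) \/
           ((((u == x) && (v == y)) || ((u == y) && (v == x))) && (e1 x1 y1 || e2 x2 y2)))])].

Definition admissible_2cut (T : finType) (e : rel T) (x y : T) : Prop :=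
  exists (T1 T2 : finType) (e1 : rel T1) (e2 : rel T2)
         (z1 x1 y1 : T1) (z2 x2 y2 : T2),
    [/\ simple_graph e1, simple_graph e2,
        nedges e1 < nedges e, nedges e2 < nedges e &
        is_2sum e1 e2 e z1 x1 y1 z2 x2 y2 x y].

Definition isomorphic (T T' : finType) (e : rel T) (e' : rel T') : Prop :=
  exists f : T -> T', bijective f /\ forall u v, e' (f u) (f v) = e u v.

Definition K23 : rel ('I_2 + 'I_3)%type :=
  fun u v => match u, v with
             | inl _, inr _ | inr _, inl _ => true
             | _, _ => false end.

Definition K4_minus_e : rel 'I_4 :=
  fun u v => (u != v) && ~~ ((val u <= 1) && (val v <= 1)).

From mathcomp Require Import all_boot.
Set Implicit Arguments. Unset Strict Implicit. Unset Printing Implicit Defensive.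

(* Suppose S is a union of components of G - {x, y}.  Cutting G along {x, y}
   into G[S + x + y] and G - S, each completed by a new vertex z adjacent to x
   and y (and the edge xy kept on one side), exhibits G as a 2-sum; it is
   admissible as soon as each side has fewer edges than G.  Charging the two
   edges at z to edges from x and from y into the other part, a side is smaller
   as soon as the other part carries one more edge: an edge inside a component
   with at least two vertices, a second edge at x coming from a second
   component, or the edge xy.  Ruling these out leaves a singleton component
   when xy is not an edge, and otherwise, or with at least three components,
   forces all components to be single vertices adjacent to exactly x and y;
   with four of them, splitting off two would be admissible.  This leaves
   K_4 - e and K_{2,3}. *)

Definition arcs (T : finType) (e : rel T) : {set T * T} := [set p | e p.1 p.2].

Lemma even_card_arcs (T : finType) (e : rel T) :
  simple_graph e -> ~~ odd #|arcs e|.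
Proof.
move=> [sym_e irr_e]; set P := arcs e.
set L := [set p : T * T | enum_rank p.1 < enum_rank p.2].
suff reversal : #|P :\: L| = #|P :&: L| by rewrite -(cardsID L P) reversal addnn odd_double.
have -> : P :\: L = [set (p.2, p.1) | p in P :&: L].
  apply/setP => -[u v]; rewrite !inE /=; apply/andP/imsetP.
  - move=> [Nuv euv]; exists (v, u) => //; rewrite !inE /= sym_e euv /=.
    rewrite ltn_neqAle leqNgt Nuv andbT; apply: contraTneq euv.
    by move=> /val_inj/enum_rank_inj ->; rewrite irr_e.
  - move=> [[a c]]; rewrite !inE /= => /andP[eac ltac] [-> ->].
    by rewrite -leqNgt ltnW // sym_e.
by rewrite card_in_imset // => -[a b] [c d] _ _ /= [-> ->].
Qed.

Lemma nedges_ltn (T1 T2 : finType) (e1 : rel T1) (e2 : rel T2) :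
  simple_graph e1 -> simple_graph e2 -> #|arcs e1| < #|arcs e2| ->
  nedges e1 < nedges e2.
Proof.
move=> /even_card_arcs ev1 /even_card_arcs ev2 lt12.
by rewrite -ltn_double (even_halfK ev1) (even_halfK ev2).
Qed.

Definition xy_pair (T : eqType) (x y u v : T) :=
  ((u == x) && (v == y)) || ((u == y) && (v == x)).

Lemma xy_pairC (T : eqType) (x y u v : T) : xy_pair x y u v = xy_pair x y v u.
Proof. by rewrite /xy_pair orbC andbC [X in _ || X]andbC. Qed.

Lemma insub_some (T : finType) (A : {set T}) (u : {v : T | v \in A}) z :
  val u = z -> insub z = Some u.
Proof. by move=> <-; exact: valK. Qed.

Lemma insub_none (T : finType) (A : {set T}) z :
  z \notin A -> insub z = None :> option {v : T | v \in A}.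
Proof. by move=> zA; apply: insubF; exact: negbTE zA. Qed.

Lemma some_sig_eq (T : finType) (A : {set T}) (u : {v : T | v \in A}) z (zA : z \in A) :
  (Some u == Some (exist _ z zA)) = (val u == z).
Proof. by apply/eqP/eqP => [[->] // | uz]; congr Some; apply: val_inj. Qed.

Section SideGraph.

Variables (T : finType) (e : rel T) (x y : T).
Hypotheses (sym_e : symmetric e) (irr_e : irreflexive e).

(* [None] is the new vertex z of the side of the 2-sum carried by A; the edge
   xy is kept only if [b]. *)
Definition side_vertex (A : {set T}) : finType := option {v : T | v \in A}.

Definition side_rel (A : {set T}) (b : bool) : rel (side_vertex A) :=
  fun a c => match a, c with
  | Some u, Some v => e (val u) (val v) && (b || ~~ xy_pair x y (val u) (val v))
  | None, Some v | Some v, None => (val v == x) || (val v == y)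
  | None, None => false
  end.

Lemma side_simple A b : simple_graph (@side_rel A b).
Proof.
split; first by move=> [u|] [v|] //=; rewrite sym_e xy_pairC.
by move=> [u|] //=; rewrite irr_e.
Qed.

(* The arcs between [None] and x, y are charged to arcs r x and r' y leaving A,
   and the arc p is not charged at all. *)
Definition side_witness (A : {set T}) (b : bool) :=
  exists r r' (p : T * T), [/\ r \notin A, e r x, r' \notin A & e r' y] /\
    [/\ e p.1 p.2, p \notin [:: (r, x); (x, r); (r', y); (y, r')] &
        ~~ [&& p.1 \in A, p.2 \in A & b || ~~ xy_pair x y p.1 p.2]].

Lemma card_side_arcs A b :
  side_witness A b -> #|arcs (@side_rel A b)| < #|arcs e|.
Proof.
move=> [r [r' [p [[rA erx r'A er'y] [ep p_new pA]]]]].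
pose F (q : side_vertex A * side_vertex A) : T * T := match q with
  | (Some u, Some v) => (val u, val v)
  | (None, Some v) => if val v == x then (r, x) else (r', y)
  | (Some u, None) => if val u == x then (x, r) else (y, r')
  | (None, None) => (x, x)
  end.
pose G (q : T * T) : side_vertex A * side_vertex A := (insub q.1, insub q.2).
have FK : {in arcs (@side_rel A b), cancel F G}.
  move=> [[u|] [v|]]; rewrite inE /= => h; rewrite /G /=.
  - by rewrite !valK.
  - case: ifP h => [/eqP ux _ | _ /= /eqP uy] /=.
    + by rewrite (insub_none rA) (insub_some ux).
    + by rewrite (insub_none r'A) (insub_some uy).
  - case: ifP h => [/eqP ux _ | _ /= /eqP uy] /=.
    + by rewrite (insub_none rA) (insub_some ux).
    + by rewrite (insub_none r'A) (insub_some uy).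
  - by [].
rewrite -(card_in_imset (can_in_inj FK)); apply/proper_card/properP; split.
  apply/subsetP => _ /imsetP[[[u|] [v|]] + ->]; rewrite !inE //=.
  - by case/andP.
  - by case: ifP; rewrite sym_e.
  - by case: ifP.
exists p; rewrite ?inE //; apply/imsetP => -[[[u|] [v|]] + pF]; rewrite inE //=.
- by move: pA; rewrite pF /= (valP u) (valP v) => /negP + /andP[_ ?].
- by move: p_new; rewrite pF /F; case: ifP; rewrite !inE eqxx ?orbT.
- by move: p_new; rewrite pF /F; case: ifP; rewrite !inE eqxx ?orbT.
Qed.

Lemma nedges_side A b : side_witness A b -> nedges (@side_rel A b) < nedges e.
Proof.
by move=> /card_side_arcs; apply: nedges_ltn (side_simple A b) (conj sym_e irr_e).
Qed.

Lemma side_witness_nbrs (A : {set T}) b r r' r2 :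
  x \in A -> y \in A -> x != y -> r \notin A -> r' \notin A -> r2 \notin A ->
  r2 != r -> e r x -> e r' y -> e r2 x -> side_witness A b.
Proof.
move=> xA yA nxy rA r'A r2A nr2r erx er'y er2x.
exists r, r', (r2, x); split=> //; split=> //=; last by rewrite (negbTE r2A).
have nr2x : r2 != x by apply: contraNneq r2A => ->.
have nr2y : r2 != y by apply: contraNneq r2A => ->.
by rewrite !inE !xpair_eqE (negbTE nr2r) (negbTE nr2x) (negbTE nr2y) (negbTE nxy)
  ?andbF ?andFb.
Qed.

Lemma side_witness_edge (A : {set T}) b r r' a c :
  x \in A -> y \in A -> r \notin A -> r' \notin A -> a \notin A -> c \notin A ->
  e r x -> e r' y -> e a c -> side_witness A b.
Proof.
move=> xA yA rA r'A aA cA erx er'y eac.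
exists r, r', (a, c); split=> //; split=> //=; last by rewrite (negbTE aA).
have [nax nay] : a != x /\ a != y by split; apply: contraNneq aA => ->.
have [ncx ncy] : c != x /\ c != y by split; apply: contraNneq cA => ->.
by rewrite !inE !xpair_eqE (negbTE nax) (negbTE nay) (negbTE ncx) (negbTE ncy)
  ?andbF ?andFb.
Qed.

Lemma side_witness_xy (A : {set T}) r r' :
  x \in A -> y \in A -> x != y -> r \notin A -> r' \notin A ->
  e r x -> e r' y -> e x y -> side_witness A false.
Proof.
move=> xA yA nxy rA r'A erx er'y exy.
exists r, r', (x, y); split=> //; split=> //=; last by rewrite /xy_pair !eqxx ?andbF.
have [nxr nyr] : x != r /\ y != r by split; apply: contraNneq rA => <-.
have nxr' : x != r' by apply: contraNneq r'A => <-.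
by rewrite !inE !xpair_eqE (negbTE nxr) (negbTE nyr) (negbTE nxr') (negbTE nxy)
  eq_sym (negbTE nxy) ?andbF ?andFb.
Qed.

End SideGraph.
Arguments side_rel {T} e x y A b.

Section Separation.

Variables (T : finType) (e : rel T) (x y : T) (S : {set T}).
Hypotheses (sym_e : symmetric e) (irr_e : irreflexive e) (nxy : x != y).
Hypothesis S_sub : S \subset ~: [set x; y].
Hypothesis S_closed :
  forall u v, u \in S -> v \notin S -> v \notin [set x; y] -> ~~ e u v.

Local Notation A1 := (S :|: [set x; y]).
Local Notation A2 := (~: S).

Lemma edge_in_side u v :
  e u v -> ((u \in A1) && (v \in A1)) || ((u \in A2) && (v \in A2)).
Proof.
move=> euv.
have inA1 a c : e a c -> a \in S -> c \in A1.
  move=> eac aS; apply: contraT; rewrite in_setU negb_or => /andP[cS cxy].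
  by rewrite (negbTE (S_closed aS cS cxy)) in eac.
case: (boolP (u \in S)) => uS; first by rewrite in_setU uS /= (inA1 u v).
case: (boolP (v \in S)) => vS; first by rewrite (inA1 v u) 1?sym_e // in_setU vS.
by rewrite !in_setC uS vS orbT.
Qed.

Lemma side_2sum b1 b2 (x1 : x \in A1) (y1 : y \in A1) (x2 : x \in A2) (y2 : y \in A2) :
  b1 || b2 = e x y ->
  is_2sum (side_rel e x y A1 b1) (side_rel e x y A2 b2) e
    None (Some (exist _ x x1)) (Some (exist _ y y1))
    None (Some (exist _ x x2)) (Some (exist _ y y2)) x y.
Proof.
move=> b12; rewrite /is_2sum /=; split.
- by rewrite some_sig_eq.
- by rewrite some_sig_eq.
- by case=> [u|] //=; rewrite !some_sig_eq.
- by case=> [u|] //=; rewrite !some_sig_eq.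
pose f A (a : side_vertex A) : T := if a is Some u then val u else x.
exists (@f A1), (@f A2); split.
- split=> //; move=> [a|] [c|]; rewrite !inE //= => _ _ ac;
    by congr Some; apply: val_inj.
- move=> v; case: (boolP (v \in S)) => vS.
  + have vA1 : v \in A1 by rewrite inE vS.
    by left; exists (Some (exist _ v vA1)).
  + have vA2 : v \in A2 by rewrite inE.
    by right; exists (Some (exist _ v vA2)).
- move=> [a|] [c|] // _ _ /= ac; rewrite !some_sig_eq /= -ac.
  have : sval a \in A1 := valP a.
  have : sval c \in A2 := valP c.
  by rewrite -ac !inE => aS /or3P[/(negP aS) | -> | ->]; rewrite ?orbT.
have joins : (e x y && (b1 || ~~ xy_pair x y x y)) ||
             (e x y && (b2 || ~~ xy_pair x y x y)) = e x y.
  by rewrite /xy_pair !eqxx /= !orbF -andb_orr b12 andbb.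
move=> u v; rewrite -/(xy_pair x y u v) joins; split.
- move=> euv; case uv_xy: (xy_pair x y u v).
    right; right; move: uv_xy euv.
    by rewrite /xy_pair => /orP[]/andP[/eqP-> /eqP->] //; rewrite sym_e.
  case/orP: (edge_in_side euv) => /andP[uA vA]; [left | right; left];
    exists (Some (exist _ u uA)), (Some (exist _ v vA));
    by split=> //=; rewrite !some_sig_eq /= -/(xy_pair x y u v) uv_xy euv orbT.
- case=> [[[a|] [[c|] [//= _ _ /andP[/andP[eac _] _] <- <-]]] |
          [[[a|] [[c|] [//= _ _ /andP[/andP[eac _] _] <- <-]]] | /andP[uv_xy exy]]] //.
  by case/orP: uv_xy => /andP[/eqP -> /eqP ->]; rewrite // sym_e.
Qed.

Lemma admissible_of_separation b1 b2 :
  b1 || b2 = e x y -> side_witness e x y A1 b1 -> side_witness e x y A2 b2 ->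
  admissible_2cut e x y.
Proof.
move=> b12 w1 w2.
have x1 : x \in A1 by rewrite !inE eqxx orbT.
have y1 : y \in A1 by rewrite !inE eqxx !orbT.
have x2 : x \in A2 by rewrite inE; apply/negP => /(subsetP S_sub); rewrite !inE eqxx.
have y2 : y \in A2.
  by rewrite inE; apply/negP => /(subsetP S_sub); rewrite !inE eqxx orbT.
exists _, _, (side_rel e x y A1 b1), (side_rel e x y A2 b2),
  None, (Some (exist _ x x1)), (Some (exist _ y y1)),
  None, (Some (exist _ x x2)), (Some (exist _ y y2)).
split; [exact: side_simple | exact: side_simple | exact: nedges_side w1 |
        exact: nedges_side w2 | exact: side_2sum x1 y1 x2 y2 b12].
Qed.

End Separation.

Section Components.

Variables (T : finType) (e : rel T) (S : {set T}).
Hypothesis sym_e : symmetric e.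

Definition comp (u : T) : {set T} := [set v in S | connect (sub_rel e S) u v].

Lemma components_comp : components e S = [set comp u | u in S].
Proof. by []. Qed.

Lemma comp_self u : u \in S -> u \in comp u.
Proof. by move=> uS; rewrite inE uS connect0. Qed.

Lemma comp_sub u : comp u \subset S.
Proof. by apply/subsetP => v; rewrite inE => /andP[]. Qed.

Lemma comp_closed u a b : a \in comp u -> b \in S -> e a b -> b \in comp u.
Proof.
rewrite !inE => /andP[aS ua] bS eab; rewrite bS /=.
by apply: connect_trans ua (connect1 _); rewrite /sub_rel aS bS eab.
Qed.

Lemma comp_of_mem u v : v \in comp u -> comp v = comp u.
Proof.
have sub_sym : connect_sym (sub_rel e S).
  by apply: sym_connect_sym => a b; rewrite /sub_rel sym_e andbCA.
rewrite inE => /andP[vS uv]; apply/setP => w; rewrite !inE.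
case: (w \in S) => //=; apply/idP/idP; first exact: connect_trans.
by apply: connect_trans; rewrite sub_sym.
Qed.

Lemma comp_eq_of_mem u v w : w \in comp u -> w \in comp v -> comp u = comp v.
Proof. by move=> /comp_of_mem <- /comp_of_mem <-. Qed.

Lemma comp_has_edge u a c : a \in comp u -> c \in comp u -> a != c ->
  exists a' c', [/\ a' \in comp u, c' \in comp u & e a' c'].
Proof.
move=> au cu nac; rewrite -(comp_of_mem au) in cu.
move: cu; rewrite inE => /andP[_ /connectP[[|d p] /= pth cE]].
  by rewrite cE eqxx in nac.
case/andP: pth; rewrite /sub_rel => /and3P[_ dS ead] _.
by exists a, d; split=> //; apply: comp_closed au dS ead.
Qed.

End Components.

Lemma connect_exit (T : finType) (r : rel T) (A : {pred T}) a b :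
  connect r a b -> a \in A -> b \notin A -> exists u v, [/\ r u v, u \in A & v \notin A].
Proof.
move=> /connectP[p]; elim: p a => [|c p IH] a /=; first by move=> _ -> ->.
move=> /andP[ac pth] lastb aA; case: (boolP (c \in A)) => cA.
- exact: IH pth lastb cA.
- by exists a, c.
Qed.

(* A path from u to y in G - x leaves C u, and it can only do so through y. *)
Lemma comp_has_nbr (T : finType) (e : rel T) (x y u : T) :
  symmetric e -> two_connected e -> x != y -> u \in ~: [set x; y] ->
  exists2 w, w \in comp e (~: [set x; y]) u & e w y.
Proof.
move=> sym_e [_ [_ G2]] nxy uX; set X := ~: [set x; y].
have ux : u \in [set~ x] by move: uX; rewrite !inE negb_or => /andP[].
have yx : y \in [set~ x] by rewrite !inE eq_sym.
have yC : y \notin comp e X u by rewrite !inE eqxx orbT.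
have [a [b [/and3P[_ bx eab] aC bC]]] :=
  connect_exit (G2 x u y ux yx) (comp_self e uX) yC.
exists a => //; case: (boolP (b \in X)) => bX.
- by rewrite (comp_closed aC bX eab) in bC.
- by move: bX bx; rewrite !inE negbK => /orP[] /eqP bE; rewrite bE ?eqxx // -bE.
Qed.

Lemma isomorphic_of_inj (T T' : finType) (e : rel T) (e' : rel T') (f : T -> T') :
  injective f -> #|T'| <= #|T| -> (forall u v, e' (f u) (f v) = e u v) ->
  isomorphic e e'.
Proof. by move=> finj card_le fE; exists f; split=> //; exact: inj_card_bij. Qed.

Lemma inord_index_inj n (T : eqType) (s : seq T) a b :
  size s <= n.+1 -> a \in s -> b \in s ->
  inord (index a s) = inord (index b s) :> 'I_n.+1 -> a = b.
Proof.
move=> sz_s a_s b_s /(congr1 (@nat_of_ord _)).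
by rewrite !inordK ?(leq_trans _ sz_s) ?index_mem // => /(index_inj a a_s b_s).
Qed.

Lemma size_uniq_le_card (T : finType) (s : seq T) : uniq s -> size s <= #|T|.
Proof. by move/card_uniqP <-; exact: max_card. Qed.

Lemma isomorphic_K23 (T : finType) (e : rel T) (h s : seq T) :
  uniq (h ++ s) -> size h = 2 -> size s = 3 -> (forall t, t \notin h -> t \in s) ->
  (forall a b, e a b = (a \in h) (+) (b \in h)) -> isomorphic e K23.
Proof.
move=> Uhs sz_h sz_s cover eE.
pose f t : ('I_2 + 'I_3)%type :=
  if t \in h then inl (inord (index t h)) else inr (inord (index t s)).
apply: (@isomorphic_of_inj _ _ _ _ f).
- move=> a b; rewrite /f; case: ifP => ah; case: ifP => bh // [].
    by apply: inord_index_inj; rewrite ?sz_h.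
  by apply: inord_index_inj; rewrite ?sz_s ?cover ?ah ?bh.
- by rewrite card_sum !card_ord -sz_s -sz_h -size_cat size_uniq_le_card.
- by move=> a b; rewrite eE /f; case: ifP; case: ifP.
Qed.

Lemma isomorphic_K4_minus_e (T : finType) (e : rel T) (h s : seq T) :
  uniq (s ++ h) -> size s = 2 -> size h = 2 -> (forall t, t \notin h -> t \in s) ->
  (forall a b, e a b = (a != b) && ((a \in h) || (b \in h))) ->
  isomorphic e K4_minus_e.
Proof.
move=> Ush sz_s sz_h cover eE.
pose f t : 'I_4 := if t \in h then inord (index t h).+2 else inord (index t s).
have index_lt2 (t : T) l : size l = 2 -> t \in l -> index t l < 2.
  by move=> <-; rewrite index_mem.
have f_small t : (val (f t) <= 1) = (t \notin h).
  rewrite /f; case: ifP => th /=; rewrite inordK //=.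
  - exact: index_lt2.
  - by apply/idP/index_lt2; rewrite ?cover ?th.
  - by rewrite (leq_trans (index_lt2 t s _ _)) // cover ?th.
have finj : injective f.
  move=> a b /[dup] fab; rewrite /f; case: ifP => ah; case: ifP => bh.
  - move=> /(congr1 (@nat_of_ord _)); rewrite !inordK; try exact: index_lt2.
    by move=> [] /(index_inj a ah bh).
  - by move: (f_small a) (f_small b); rewrite fab ah bh => ->.
  - by move: (f_small a) (f_small b); rewrite fab ah bh => ->.
  - by apply: inord_index_inj; rewrite ?sz_s ?cover ?ah ?bh.
apply: (@isomorphic_of_inj _ _ _ _ f finj).
- by rewrite card_ord (_ : 4 = size (s ++ h)) ?size_uniq_le_card // size_cat sz_s sz_h.
- by move=> a b; rewrite eE /K4_minus_e (inj_eq finj) !f_small negb_and !negbK.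
Qed.

Lemma components_connected_le1 (T : finType) (e : rel T) (S : {set T}) :
  symmetric e -> connected_on e S -> #|components e S| <= 1.
Proof.
move=> sym_e connS; rewrite components_comp.
apply/card_le1_eqP => _ _ /imsetP[u uS ->] /imsetP[v vS ->].
by apply: (comp_eq_of_mem sym_e (w := v)); rewrite ?comp_self // inE vS connS.
Qed.

Lemma cut_vertices_neq (T : finType) (e : rel T) (x y : T) :
  symmetric e -> two_connected e -> 1 < #|components e (~: [set x; y])| -> x != y.
Proof.
move=> sym_e [_ [_ G2]]; apply: contraTneq => ->.
by rewrite setUid -leqNgt components_connected_le1.
Qed.

Lemma card2_cover (T : finType) (B : {set T}) a b c :
  #|B| = 2 -> a \in B -> b \in B -> a != b -> c \in B -> (c == a) || (c == b).
Proof.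
move=> B2 aB bB Nab cB; apply: contraT; rewrite negb_or => /andP[Nca Ncb].
suff : 2 < #|B| by rewrite B2.
by apply/card_gt2P; exists a, b, c; split; split; rewrite // eq_sym.
Qed.

Section NonAdmissibleCut.

Variables (T : finType) (e : rel T) (x y : T).
Hypotheses (sym_e : symmetric e) (irr_e : irreflexive e) (G2 : two_connected e).
Hypotheses (nxy : x != y) (nadm : ~ admissible_2cut e x y).

Local Notation X := (~: [set x; y]).
Local Notation C := (comp e X).
Local Notation inside t := (C t :|: [set x; y]).
Local Notation outside t := (~: C t).

Lemma mem_X_comp t z : z \in C t -> z \in X.
Proof. exact/subsetP/comp_sub. Qed.

Lemma comp_nbr_y t : t \in X -> exists2 w, w \in C t & e w y.
Proof. exact: comp_has_nbr. Qed.

Lemma comp_nbr_x t : t \in X -> exists2 w, w \in C t & e w x.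
Proof.
by rewrite setUC => tX; have := comp_has_nbr sym_e G2 _ tX; rewrite eq_sym setUC; apply.
Qed.

Lemma comp_no_exit t a b : a \in C t -> b \notin C t -> b \notin [set x; y] -> ~~ e a b.
Proof.
move=> aC bC bxy; apply/negP => eab.
by move: bC; rewrite (comp_closed aC _ eab) // in_setC.
Qed.

Lemma joins_inside t : (x \in inside t) && (y \in inside t).
Proof. by rewrite !inE !eqxx !orbT. Qed.

Lemma joins_outside t : (x \in outside t) && (y \in outside t).
Proof.
by apply/andP; split; rewrite in_setC; apply/negP => /mem_X_comp; rewrite !inE eqxx ?orbT.
Qed.

Lemma other_comp_notin_inside t s z : C s != C t -> z \in C s -> z \notin inside t.
Proof.
move=> Nst zs; rewrite in_setU negb_or; apply/andP; split.
  by apply: contra Nst => zt; rewrite (comp_eq_of_mem sym_e zs zt).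
by move: (mem_X_comp zs); rewrite in_setC.
Qed.

Lemma no_comp_separation t b1 b2 : t \in X -> b1 || b2 = e x y ->
  side_witness e x y (inside t) b1 -> side_witness e x y (outside t) b2 -> False.
Proof.
move=> tX b12 w1 w2; apply: nadm.
apply: (admissible_of_separation sym_e irr_e nxy _ _ b12 w1 w2); first exact: comp_sub.
exact: comp_no_exit.
Qed.

Lemma witness_inside_big t s b : s \in X -> C s != C t -> 1 < #|C s| ->
  side_witness e x y (inside t) b.
Proof.
move=> sX Nst /card_gt1P[a [c [aC cC nac]]].
have [a' [c' [a'C c'C ea'c']]] := comp_has_edge sym_e aC cC nac.
have [r rC erx] := comp_nbr_x sX; have [r' r'C er'y] := comp_nbr_y sX.
have /andP[xA yA] := joins_inside t.
exact: side_witness_edge xA yA (other_comp_notin_inside Nst rC)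
  (other_comp_notin_inside Nst r'C) (other_comp_notin_inside Nst a'C)
  (other_comp_notin_inside Nst c'C) erx er'y ea'c'.
Qed.

Lemma witness_outside_big t b : t \in X -> 1 < #|C t| -> side_witness e x y (outside t) b.
Proof.
move=> tX /card_gt1P[a [c [aC cC nac]]].
have [a' [c' [a'C c'C ea'c']]] := comp_has_edge sym_e aC cC nac.
have [r rC erx] := comp_nbr_x tX; have [r' r'C er'y] := comp_nbr_y tX.
have /andP[xA yA] := joins_outside t.
have out z : z \in C t -> z \notin outside t by rewrite in_setC negbK.
exact: side_witness_edge xA yA (out _ rC) (out _ r'C) (out _ a'C) (out _ c'C)
  erx er'y ea'c'.
Qed.

Lemma witness_outside_xy t : t \in X -> e x y -> side_witness e x y (outside t) false.
Proof.
move=> tX exy; have /andP[xA yA] := joins_outside t.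
have [r rC erx] := comp_nbr_x tX; have [r' r'C er'y] := comp_nbr_y tX.
have out z : z \in C t -> z \notin outside t by rewrite in_setC negbK.
exact: side_witness_xy xA yA nxy (out _ rC) (out _ r'C) erx er'y exy.
Qed.

Lemma witness_inside_two t s1 s2 b : s1 \in X -> s2 \in X ->
  C s1 != C t -> C s2 != C t -> C s1 != C s2 -> side_witness e x y (inside t) b.
Proof.
move=> s1X s2X N1t N2t N12; have /andP[xA yA] := joins_inside t.
have [r rC erx] := comp_nbr_x s1X; have [r' r'C er'y] := comp_nbr_y s1X.
have [r2 r2C er2x] := comp_nbr_x s2X.
have Nr2r : r2 != r.
  apply: contra N12 => /eqP r2r.
  by rewrite (comp_eq_of_mem sym_e rC (_ : r \in C s2)) // -r2r.
exact: side_witness_nbrs xA yA nxy (other_comp_notin_inside N1t rC)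
  (other_comp_notin_inside N1t r'C) (other_comp_notin_inside N2t r2C)
  Nr2r erx er'y er2x.
Qed.

Lemma comp_singleton t : t \in X -> #|C t| <= 1 -> C t = [set t].
Proof.
by move=> tX le1; apply/esym/eqP; rewrite eqEcard sub1set (comp_self e tX) cards1.
Qed.

Lemma singletons_nbrs : {in X, forall t, C t = [set t]} ->
  {in X, forall a b, e a b = (b \in [:: x; y])}.
Proof.
move=> single a aX b; have only_a w : w \in C a -> w = a by rewrite single // => /set1P.
case: (boolP (b \in X)) => bX.
- have -> : b \in [:: x; y] = false.
    by move: bX; rewrite !inE negb_or => /andP[/negbTE -> /negbTE ->].
  apply/negbTE; have [<- | Nab] := eqVneq a b; first by rewrite irr_e.
  apply: (comp_no_exit (comp_self e aX)); last by rewrite -in_setC.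
  by rewrite single // in_set1 eq_sym.
- move: bX; rewrite !inE negbK => /orP[] /eqP ->; rewrite eqxx ?orbT.
  + by have [w /only_a <-] := comp_nbr_x aX.
  + by have [w /only_a <-] := comp_nbr_y aX.
Qed.

Lemma hub_edge a b : a \in [:: x; y] -> b \in [:: x; y] -> e a b = (a != b) && e x y.
Proof.
rewrite !inE => /orP[] /eqP -> /orP[] /eqP ->; rewrite ?irr_e ?eqxx ?nxy //.
by rewrite sym_e eq_sym nxy.
Qed.

Lemma mem_X_of_not_hub t : t \notin [:: x; y] -> t \in X.
Proof. by rewrite !inE. Qed.

Section Singletons.

Hypothesis single : {in X, forall t, C t = [set t]}.

Lemma singletons_edge_xor : ~~ e x y ->
  forall a b, e a b = (a \in [:: x; y]) (+) (b \in [:: x; y]).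
Proof.
move=> nexy a b.
case aH : (a \in [:: x; y]); case bH : (b \in [:: x; y]) => /=.
- by rewrite hub_edge // (negbTE nexy) andbF.
- by rewrite sym_e (singletons_nbrs single (mem_X_of_not_hub (negbT bH))).
- by rewrite (singletons_nbrs single (mem_X_of_not_hub (negbT aH))).
- by rewrite (singletons_nbrs single (mem_X_of_not_hub (negbT aH))).
Qed.

Lemma singletons_edge_K4 : e x y ->
  forall a b, e a b = (a != b) && ((a \in [:: x; y]) || (b \in [:: x; y])).
Proof.
move=> exy a b.
case aH : (a \in [:: x; y]); case bH : (b \in [:: x; y]) => /=.
- by rewrite hub_edge // exy andbT.
- rewrite andbT sym_e (singletons_nbrs single (mem_X_of_not_hub (negbT bH))) aH.
  by apply/esym; apply: contraFneq bH => <-.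
- rewrite andbT (singletons_nbrs single (mem_X_of_not_hub (negbT aH))) bH.
  by apply/esym; apply: contraFneq aH => ->.
- by rewrite andbF (singletons_nbrs single (mem_X_of_not_hub (negbT aH))).
Qed.

(* With four singleton components, splitting off two of them is admissible. *)
Lemma singletons_no_four p q w t : ~~ e x y ->
  p \in X -> q \in X -> w \in X -> t \in X -> uniq [:: p; q; w; t] -> False.
Proof.
move=> nexy pX qX wX tX; rewrite /= !inE !negb_or.
move=> /and4P[/and3P[Npq Npw Npt] /andP[Nqw Nqt] Nwt _].
have nbr a b : a \in X -> b \in [:: x; y] -> e a b.
  by move=> aX bxy; rewrite (singletons_nbrs single aX).
have [x_hub y_hub] : x \in [:: x; y] /\ y \in [:: x; y] by rewrite !inE !eqxx orbT.
have out_in a : a \in X -> p != a -> q != a -> a \notin [set p; q] :|: [set x; y].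
  move=> aX pa qa; move: (aX); rewrite in_setC => axy.
  by rewrite in_setU negb_or axy andbT !inE negb_or !(eq_sym a) pa.
have in_out a : a \in [set x; y] -> a \in ~: [set p; q].
  move=> axy; rewrite !inE negb_or; apply/andP; split; apply: contraTneq axy => ->;
    by rewrite -in_setC.
apply: nadm.
apply: (@admissible_of_separation _ _ _ _ [set p; q] sym_e irr_e nxy _ _ false false).
- by apply/subsetP => z /set2P[] ->.
- move=> a b /set2P[]-> _ bxy; rewrite (singletons_nbrs single) //;
    by move: bxy; rewrite !inE.
- by rewrite (negbTE nexy).
- have [xA yA] : x \in [set p; q] :|: [set x; y] /\ y \in [set p; q] :|: [set x; y].
    by rewrite !inE !eqxx !orbT.
  have [wA tA] := (out_in w wX Npw Nqw, out_in t tX Npt Nqt).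
  by apply: (side_witness_nbrs false xA yA nxy wA wA tA); rewrite ?nbr // eq_sym.
- have [xS yS] : x \in [set x; y] /\ y \in [set x; y] by rewrite !inE !eqxx orbT.
  have [pS qS] : p \notin ~: [set p; q] /\ q \notin ~: [set p; q].
    by rewrite !inE !eqxx orbT.
  by apply: (side_witness_nbrs false (in_out x xS) (in_out y yS) nxy pS pS qS);
    rewrite ?nbr // eq_sym.
Qed.

End Singletons.

Lemma witness_inside_of_three t p q w b : p \in X -> q \in X -> w \in X ->
  C p != C q -> C q != C w -> C w != C p -> side_witness e x y (inside t) b.
Proof.
move=> pX qX wX Npq Nqw Nwp.
have [<- | Npt] := eqVneq (C p) (C t).
  by apply: witness_inside_two qX wX _ Nwp Nqw; rewrite eq_sym.
have [<- | Nqt] := eqVneq (C q) (C t).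
  by apply: witness_inside_two pX wX Npq _ _; rewrite eq_sym.
exact: witness_inside_two pX qX Npt Nqt Npq.
Qed.

Lemma comp_singleton_of_xy t s : e x y -> t \in X -> s \in X -> C t != C s ->
  C t = [set t].
Proof.
move=> exy tX sX Nts; apply: (comp_singleton tX); rewrite leqNgt; apply/negP => big_t.
apply: (no_comp_separation sX (b1 := true) (b2 := false)); first by rewrite exy.
- exact: witness_inside_big tX Nts big_t.
- exact: witness_outside_xy.
Qed.

Section ThreeComponents.

Variables p q w : T.
Hypotheses (pX : p \in X) (qX : q \in X) (wX : w \in X).
Hypotheses (Npq : C p != C q) (Nqw : C q != C w) (Nwp : C w != C p).

Lemma three_comps_nonadj : ~~ e x y.
Proof.
apply/negP => exy; apply: (no_comp_separation pX (b1 := true) (b2 := false)).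
- by rewrite exy.
- exact: witness_inside_of_three pX qX wX Npq Nqw Nwp.
- exact: witness_outside_xy.
Qed.

Lemma three_comps_singleton t : t \in X -> C t = [set t].
Proof.
move=> tX; apply: (comp_singleton tX); rewrite leqNgt; apply/negP => big_t.
apply: (no_comp_separation tX (b1 := false) (b2 := false)).
- by rewrite (negbTE three_comps_nonadj).
- exact: witness_inside_of_three pX qX wX Npq Nqw Nwp.
- exact: witness_outside_big.
Qed.

End ThreeComponents.

Lemma two_comps_pick : 1 < #|components e X| ->
  exists u v, [/\ u \in X, v \in X & C u != C v].
Proof.
rewrite components_comp => /card_gt1P[_ [_ [/imsetP[u uX ->] /imsetP[v vX ->] Nuv]]].
by exists u, v.
Qed.

Lemma three_comps_K23 : 2 < #|components e X| -> isomorphic e K23.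
Proof.
rewrite components_comp => /card_gt2P[_ [_ [_ [[/imsetP[p pX ->] /imsetP[q qX ->]
  /imsetP[w wX ->]] [Npq Nqw Nwp]]]]].
have nexy := three_comps_nonadj pX qX wX Npq Nqw Nwp.
have single := three_comps_singleton pX qX wX Npq Nqw Nwp.
have [npq nqw nwp] : [/\ p != q, q != w & w != p].
  by split; [move: Npq | move: Nqw | move: Nwp]; apply: contraNneq => ->.
have hub_X s : s \in X -> s \notin [:: x; y] by rewrite !inE.
apply: (isomorphic_K23 (h := [:: x; y]) (s := [:: p; q; w])) => //.
- rewrite cat_uniq /= (negbTE (hub_X p pX)) (negbTE (hub_X q qX)) (negbTE (hub_X w wX)).
  by rewrite !inE !negb_or nxy npq nqw (eq_sym p) nwp.
- move=> t /mem_X_of_not_hub tX; apply: contraT => t_pqw.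
  case: (singletons_no_four single nexy pX qX wX tX).
  move: t_pqw; rewrite /= !inE !negb_or npq nqw (eq_sym p) nwp => /and3P[tp tq tw].
  by rewrite ![_ == t]eq_sym tp tq tw.
- exact: singletons_edge_xor single nexy.
Qed.

Lemma two_comps_K4_minus_e : #|components e X| = 2 -> e x y -> isomorphic e K4_minus_e.
Proof.
move=> k2 exy; have [u [v [uX vX Nuv]]] := two_comps_pick (eq_leq (esym k2)).
have su := comp_singleton_of_xy exy uX vX Nuv.
have sv : C v = [set v] by apply: comp_singleton_of_xy exy vX uX _; rewrite eq_sym.
have uv t : t \in X -> (t == u) || (t == v).
  move=> tX; have := card2_cover k2 _ _ Nuv (_ : C t \in _).
  rewrite components_comp => /(_ (imset_f _ uX) (imset_f _ vX) (imset_f _ tX)).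
  by case/orP=> /eqP Ct; have := comp_self e tX; rewrite Ct ?su ?sv => /set1P ->;
    rewrite eqxx ?orbT.
have single t : t \in X -> C t = [set t] by move=> /uv /orP[] /eqP ->.
have [nu nv] : u \notin [:: x; y] /\ v \notin [:: x; y] by move: uX vX; rewrite !inE.
apply: (isomorphic_K4_minus_e (h := [:: x; y]) (s := [:: u; v])) => //.
- move: nu nv; rewrite cat_uniq /= !inE !negb_or nxy ![x == _]eq_sym ![y == _]eq_sym.
  move=> /andP[-> ->] /andP[-> ->]; rewrite !andbT.
  by apply: contraNneq Nuv => ->.
- by move=> t /mem_X_of_not_hub /uv; rewrite !inE.
- exact: singletons_edge_K4 single exy.
Qed.

Lemma two_comps_singleton : 1 < #|components e X| -> ~~ e x y ->
  exists2 D, D \in components e X & #|D| = 1.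
Proof.
move=> k2 nexy; have [u [v [uX vX Nuv]]] := two_comps_pick k2.
have small t : t \in X -> #|C t| <= 1 -> exists2 D, D \in components e X & #|D| = 1.
  move=> tX le1; exists (C t); first by rewrite components_comp imset_f.
  by rewrite comp_singleton ?cards1.
have [/(small u uX) // | big_u] := leqP #|C u| 1.
have [/(small v vX) // | big_v] := leqP #|C v| 1.
case: (no_comp_separation uX (b1 := false) (b2 := false)).
- by rewrite (negbTE nexy).
- by apply: witness_inside_big vX _ big_v; rewrite eq_sym.
- exact: witness_outside_big uX big_u.
Qed.

End NonAdmissibleCut.

Theorem mainTheorem5 (T : finType) (e : rel T) (x y : T) :
  simple_graph e -> two_connected e ->
  2 <= #|components e (~: [set x; y])| ->
  ~ admissible_2cut e x y ->
  [/\ (3 <= #|components e (~: [set x; y])| -> isomorphic e K23),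
      (#|components e (~: [set x; y])| = 2 -> e x y -> isomorphic e K4_minus_e) &
      (#|components e (~: [set x; y])| = 2 -> ~~ e x y ->
         exists2 C, C \in components e (~: [set x; y]) & #|C| = 1)].
Proof.
move=> [sym_e irr_e] G2 k2 nadm; have nxy := cut_vertices_neq sym_e G2 k2.
split=> [k3 | k_eq2 exy | _ nexy].
- exact: three_comps_K23 sym_e irr_e G2 nxy nadm k3.
- exact: two_comps_K4_minus_e sym_e irr_e G2 nxy nadm k_eq2 exy.
- exact: two_comps_singleton sym_e irr_e G2 nxy nadm k2 nexy.
Qed.
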